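(* Let $A'=(c^1,\ldots,c^m)$, $A''=(c^{m+1},\ldots,c^M)$, $A=(c^1,\ldots,c^M)$ be sequences of customer types and $B'=(s^1,\ldots,s^n)$, $B''=(s^{n+1},\ldots,s^N)$, $B=(s^1,\ldots,s^N)$ sequences of server types. Let $K',K'',K$ be the numbers of unmatched customers and $L',L'',L$ the numbers of unmatched servers in the unique complete FCFS matchings of $(A',B')$, of $(A'',B'')$ and of $(A,B)$ respectively. Then $K\le K'+K''$ and $L\le L'+L''$.
   Context: Let $\mathcal{C}=\{c_1,\ldots,c_I\}$ (customer types) and $\mathcal{S}=\{s_1,\ldots,s_J\}$ (server types) be finite sets and $G=(\mathcal{C},\mathcal{S},\mathcal{E})$, $\mathcal{E}\subseteq\mathcal{C}\times\mathcal{S}$, a connected bipartite compatibility graph; a customer of type $c_i$ and a server of type $s_j$ are compatible iff $(c_i,s_j)\in\mathcal{E}$. Given ordered sequences $(c^m)_{m\in T_1}$, $(s^n)_{n\in T_2}$ of types, a matching is a set $A\subseteq T_1\times T_2$ such that $(m,n)\in A\Rightarrow (c^m,s^n)\in\mathcal{E}$ and each index appears in at most one pair. It is complete if there is no unmatched $m$ and unmatched $n$ with $(c^m,s^n)\in\mathcal{E}$. It is FCFS if for every $(m,n)\in A$: for every $l<n$ with $(c^m,s^l)\in\mathcal{E}$ there is $k<m$ with $(k,l)\in A$, and for every $k<m$ with $(c^k,s^n)\in\mathcal{E}$ there is $l<n$ with $(k,l)\in A$. For finite index sets a complete FCFS matching exists and is unique. *)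

From mathcomp Require Import all_boot.
Set Implicit Arguments. Unset Strict Implicit. Unset Printing Implicit Defensive.

Definition bip_rel (C S : finType) (E : C -> S -> bool) : rel (C + S) :=
  fun x y => match x, y with
             | inl c, inr s => E c s
             | inr s, inl c => E c s
             | _, _ => false
             end.

Definition connected_bip (C S : finType) (E : C -> S -> bool) : Prop :=
  forall x y : C + S, connect (bip_rel E) x y.

(* A pair of finite sequences is given by lengths M, N and type functions
   c : nat -> C (customer at index i < M), s : nat -> S (server j < N).
   A matching is a boolean relation A on indices. *)
Definition is_matching (C S : Type) (E : C -> S -> bool) (M N : nat)
  (c : nat -> C) (s : nat -> S) (A : rel nat) : Prop :=
  [/\ (forall i j, A i j -> [/\ i < M, j < N & E (c i) (s j)]),
      (forall i j j', A i j -> A i j' -> j = j') &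
      (forall i i' j, A i j -> A i' j -> i = i')].

Definition cust_matched (M N : nat) (A : rel nat) (i : nat) : bool :=
  has (A i) (iota 0 N).
Definition serv_matched (M N : nat) (A : rel nat) (j : nat) : bool :=
  has (fun i => A i j) (iota 0 M).

Definition is_complete (C S : Type) (E : C -> S -> bool) (M N : nat)
  (c : nat -> C) (s : nat -> S) (A : rel nat) : Prop :=
  forall i j, i < M -> j < N -> ~~ cust_matched M N A i ->
    ~~ serv_matched M N A j -> ~~ E (c i) (s j).

Definition is_fcfs (C S : Type) (E : C -> S -> bool)
  (c : nat -> C) (s : nat -> S) (A : rel nat) : Prop :=
  forall i j, A i j ->
    (forall l, l < j -> E (c i) (s l) -> exists2 k, k < i & A k l) /\
    (forall k, k < i -> E (c k) (s j) -> exists2 l, l < j & A k l).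

Definition complete_fcfs (C S : Type) (E : C -> S -> bool) (M N : nat)
  (c : nat -> C) (s : nat -> S) (A : rel nat) : Prop :=
  [/\ is_matching E M N c s A, is_complete E M N c s A & is_fcfs E c s A].

Definition unmatched_c (M N : nat) (A : rel nat) : nat :=
  count (fun i => ~~ cust_matched M N A i) (iota 0 M).
Definition unmatched_s (M N : nat) (A : rel nat) : nat :=
  count (fun j => ~~ serv_matched M N A j) (iota 0 N).

From mathcomp Require Import all_boot.
From mathcomp Require Import zify.
Set Implicit Arguments. Unset Strict Implicit. Unset Printing Implicit Defensive.

(* When customers are processed in order, a complete FCFS matching gives each
   customer the earliest still-free compatible server (first fit), so its
   number of matched customers is the output of a greedy first-fit process.
   This count is superadditive under concatenation: serving the first block
   from the servers before n and the second block from the servers after n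
   matches at most as many customers as serving the whole sequence from all
   servers, because a first-block customer taking a server of the second pool
   costs the second block at most one match.  Unmatched servers are handled by
   exchanging the roles of customers and servers. *)

Section FirstFitGreedy.
Variables (C S : Type) (E : C -> S -> bool) (s : nat -> S) (N : nat).
Implicit Types (F G : pred nat) (x : C) (cs : seq C).

Definition first_fit F x : option nat :=
  let j := find (fun j => F j && E x (s j)) (iota 0 N) in
  if j < N then Some j else None.

Variant first_fit_spec F x : option nat -> Type :=
| FirstFitSome h of h < N & F h & E x (s h) &
    (forall l, l < h -> F l -> ~~ E x (s l)) : first_fit_spec F x (Some h)
| FirstFitNone of (forall l, l < N -> F l -> ~~ E x (s l)) :
    first_fit_spec F x None.

Lemma first_fitP F x : first_fit_spec F x (first_fit F x).
Proof.
rewrite /first_fit; set P := fun j => F j && E x (s j).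
case: ifP => hN.
- have fit : has P (iota 0 N) by rewrite has_find size_iota.
  have /andP[Fh Eh] := nth_find 0 fit; rewrite nth_iota // add0n in Fh Eh.
  apply: FirstFitSome => // l lh Fl; apply: contraFN (before_find 0 lh) => El.
  by rewrite nth_iota ?add0n ?(ltn_trans lh) // /P Fl El.
- have /hasPn noP : ~~ has P (iota 0 N) by rewrite has_find size_iota hN.
  apply: FirstFitNone => l lN Fl; apply: contraTN (noP l _) => [El|].
    by rewrite /P Fl El.
  by rewrite mem_iota.
Qed.

Lemma first_fit_some F x h : h < N -> F h -> E x (s h) ->
  (forall l, l < h -> F l -> ~~ E x (s l)) -> first_fit F x = Some h.
Proof.
move=> hN Fh Eh minh; case: first_fitP => [g _ Fg Eg ming|none].
- by case: (ltngtP g h) => [/minh/(_ Fg)|/ming/(_ Fh)|->]; rewrite ?Eg ?Eh.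
- by have := none h hN Fh; rewrite Eh.
Qed.

Lemma first_fit_none F x :
  (forall l, l < N -> F l -> ~~ E x (s l)) -> first_fit F x = None.
Proof.
by move=> none; case: first_fitP => // g gN Fg; rewrite (negPf (none g gN Fg)).
Qed.

Lemma eq_first_fit F G x : F =1 G -> first_fit F x = first_fit G x.
Proof.
move=> FG; rewrite /first_fit (@eq_find _ _ (fun j => G j && E x (s j))) //.
by move=> j; rewrite FG.
Qed.

Lemma first_fit_sub F G x h : subpred G F ->
  first_fit F x = Some h -> G h -> first_fit G x = Some h.
Proof.
move=> sGF; case: first_fitP => // h' hN _ Eh minh [<-] Gh.
by apply: first_fit_some => // l lh /sGF; apply: minh.
Qed.

Lemma first_fit_sub_none F G x : subpred G F ->
  first_fit F x = None -> first_fit G x = None.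
Proof.
move=> sGF; case: first_fitP => // none _.
by apply: first_fit_none => l lN /sGF; apply: none.
Qed.

Lemma first_fit_prefix F n x :
  first_fit (fun j => F j && (j < n)) x =
  if first_fit F x is Some h then (if h < n then Some h else None) else None.
Proof.
case: (first_fitP F x) => [h hN Fh Eh minh|none].
- case: (ltnP h n) => hn.
    apply: first_fit_some => //; first by rewrite Fh.
    by move=> l lh /andP[/(minh l lh)].
  apply: first_fit_none => l _ /andP[Fl ln].
  exact: minh (leq_trans ln hn) Fl.
- by apply: first_fit_none => l lN /andP[/(none l lN)].
Qed.

Fixpoint greedy F cs : nat :=
  if cs is x :: cs' then
    if first_fit F x is Some h then (greedy (predD1 F h) cs').+1
    else greedy F cs'
  else 0.

Lemma eq_greedy F G cs : F =1 G -> greedy F cs = greedy G cs.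
Proof.
elim: cs F G => [//|x cs IH] F G FG /=; rewrite (eq_first_fit x FG).
case: first_fit => [h|]; last exact: IH.
by congr _.+1; apply: IH => j /=; rewrite FG.
Qed.

Lemma greedy_sub F G cs : subpred G F -> greedy G cs <= greedy F cs.
Proof.
elim: cs F G => [//|x cs IH] F G sGF /=.
case hF: (first_fit F x) => [h|]; last first.
  by rewrite (first_fit_sub_none sGF hF); apply: IH.
have Gh_fit := first_fit_sub sGF hF.
case hG: (first_fit G x) => [g|].
- rewrite ltnS; apply: IH => j /= /andP[jg Gj]; rewrite sGF // andbT.
  apply: contraNneq jg => ejh; rewrite ejh in Gj *.
  by move: hG; rewrite Gh_fit // => -[->].
- apply: leqW; apply: IH => j Gj /=; rewrite sGF // andbT.
  by apply: contraTneq Gj => ->; apply/negP => /Gh_fit; rewrite hG.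
Qed.

Lemma greedy_sub1 F G z cs : subpred G F ->
  (forall j, F j -> ~~ G j -> j = z) -> greedy F cs <= (greedy G cs).+1.
Proof.
elim: cs F G z => [//|x cs IH] F G z sGF dFG /=.
case hF: (first_fit F x) => [h|]; last first.
  by rewrite (first_fit_sub_none sGF hF); apply: IH dFG.
have Fh : F h by move: hF; case: first_fitP => // ? _ ? _ _ [<-].
have Gh_fit := first_fit_sub sGF hF.
case hG: (first_fit G x) => [g|]; rewrite ltnS; last first.
  have hz : h = z by apply: (dFG _ Fh); apply/negP => /Gh_fit; rewrite hG.
  apply: greedy_sub => j /= /andP[jh Fj]; apply: contraNT jh => /(dFG j Fj) ->.
  by rewrite hz.
case: (boolP (G h)) => Gh.
- move: hG; rewrite Gh_fit // => -[<-].
  apply: (IH _ _ z) => j /=; first by case/andP=> -> /sGF.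
  by case/andP=> -> Fj /= /(dFG j Fj).
- have hz := dFG h Fh Gh.
  apply: (IH _ _ g) => j /=.
    by case/andP=> jg Gj; rewrite sGF // andbT; apply: contraTneq Gj => ->.
  case/andP=> jh Fj; rewrite negb_and negbK => /orP[/eqP //|nGj].
  by move: jh; rewrite (dFG j Fj nGj) hz eqxx.
Qed.

Lemma greedy_cat F n cs1 cs2 :
  greedy (fun j => F j && (j < n)) cs1 + greedy (fun j => F j && (n <= j)) cs2
  <= greedy F (cs1 ++ cs2).
Proof.
elim: cs1 F => [|x cs1 IH] F /=; first by apply: greedy_sub => j /andP[].
rewrite first_fit_prefix; case: (first_fit F x) => [h|]; last exact: IH.
case: ltnP => hn.
- rewrite addSn ltnS; apply: leq_trans (IH _); apply: leq_add; apply: eq_leq.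
    by apply: eq_greedy => j /=; rewrite andbA.
  apply: eq_greedy => j /=; case: eqP => // ->.
  by rewrite leqNgt hn andbF.
- apply: leq_trans (_ : _ <= greedy (fun j => F j && (j < n)) cs1 +
        (greedy (fun j => predD1 F h j && (n <= j)) cs2).+1) _.
    rewrite leq_add2l; apply: (greedy_sub1 (z := h)) => j /=.
      by case/andP=> /andP[_ ->] ->.
    by case/andP=> -> ->; rewrite !andbT negbK => /eqP.
  rewrite addnS ltnS; apply: leq_trans (IH _); rewrite leq_add2r; apply: eq_leq.
  apply: eq_greedy => j /=; case: eqP => // ->.
  by rewrite ltnNge hn andbF.
Qed.

End FirstFitGreedy.

Section FcfsIsGreedy.
Variables (C S : Type) (E : C -> S -> bool) (s : nat -> S) (N : nat).
Variables (m n o : nat) (c : nat -> C) (A : rel nat).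
Hypothesis hA : complete_fcfs E m n c (fun j => s (o + j)) A.
Hypothesis hN : o + n <= N.

(* The servers still free when customer [i] arrives; server [j] of the
   matched sequence is server [o + j] of [s]. *)
Definition fcfs_pool i : pred nat :=
  fun j => [&& o <= j, j < o + n & ~~ serv_matched i n A (j - o)].

Lemma serv_matchedS i j :
  serv_matched i.+1 n A j = serv_matched i n A j || A i j.
Proof. by rewrite /serv_matched -addn1 iotaD has_cat /= orbF. Qed.

Lemma fcfs_pool_matched i j :
  A i j -> fcfs_pool i.+1 =1 predD1 (fcfs_pool i) (o + j).
Proof.
case: hA => [[_ uniq_serv _] _ _] Aij k; rewrite /fcfs_pool serv_matchedS /=.
case: (leqP o k) => //= ok; last by rewrite andbF.
have -> : A i (k - o) = (k == o + j).
  apply/idP/eqP => [Ak|->]; last by rewrite addKn.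
  by rewrite -(uniq_serv _ _ _ Ak Aij) subnKC.
by rewrite negb_or; case: (k == o + j); rewrite ?andbF ?andbT.
Qed.

Lemma fcfs_pool_unmatched i :
  ~~ cust_matched m n A i -> fcfs_pool i.+1 =1 fcfs_pool i.
Proof.
case: hA => [[in_range _ _] _ _] nmi k; rewrite /fcfs_pool serv_matchedS.
case: (boolP (A i (k - o))) => Ak; last by rewrite orbF.
case/negP: nmi; apply/hasP; exists (k - o) => //.
by case: (in_range _ _ Ak) => _ kn _; rewrite mem_iota.
Qed.

Lemma first_fit_matched i j :
  A i j -> first_fit E s N (fcfs_pool i) (c i) = Some (o + j).
Proof.
case: hA => [[in_range _ uniq_cust] _ fcfs] Aij.
case: (in_range _ _ Aij) => _ jn Eij.
apply: first_fit_some => //.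
- by rewrite (leq_trans _ hN) // ltn_add2l.
- rewrite /fcfs_pool leq_addr ltn_add2l jn addKn /=; apply/hasPn => k.
  rewrite mem_iota => /andP[_ ki]; apply: contraTN ki => Akj.
  by rewrite (uniq_cust _ _ _ Akj Aij) ltnn.
- move=> l lj /and3P[ol _ free_l]; apply: contra free_l => El.
  have l'j : l - o < j by rewrite ltn_subLR.
  have El' : E (c i) (s (o + (l - o))) by rewrite subnKC.
  have [k ki Ak] := (fcfs _ _ Aij).1 _ l'j El'.
  by apply/hasP; exists k; rewrite ?mem_iota.
Qed.

Lemma first_fit_unmatched i : i < m -> ~~ cust_matched m n A i ->
  first_fit E s N (fcfs_pool i) (c i) = None.
Proof.
case: hA => [[_ _ _] complete fcfs] im nmi.
apply: first_fit_none => l _ /and3P[ol lo free_l]; apply/negP => El.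
have El' : E (c i) (s (o + (l - o))) by rewrite subnKC.
have l'n : l - o < n by rewrite ltn_subLR.
have /hasP[k] : serv_matched m n A (l - o).
  exact: contraTT (complete _ _ im l'n nmi) El'.
rewrite mem_iota => /andP[_ km] Ak.
case: (ltngtP k i) => [ki|ik|eki]; last subst k.
- by case/hasP: free_l; exists k; rewrite ?mem_iota.
- have [l' l'l Al'] := (fcfs _ _ Ak).2 i ik El'.
  by case/hasP: nmi; exists l'; rewrite // mem_iota (ltn_trans l'l).
- by case/hasP: nmi; exists (l - o); rewrite ?mem_iota.
Qed.

Lemma count_matched_greedy_from i d : i + d = m ->
  count (cust_matched m n A) (iota i d) =
  greedy E s N (fcfs_pool i) (map c (iota i d)).
Proof.
elim: d i => [//|d IH] i hid /=.
have im : i < m by rewrite -hid addnS ltnS leq_addr.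
rewrite (IH i.+1) ?addSnnS //.
case: (boolP (cust_matched m n A i)) => mi.
- have [j _ Aij] := hasP mi; rewrite (first_fit_matched Aij) add1n.
  by congr _.+1; apply: eq_greedy; apply: fcfs_pool_matched.
- rewrite first_fit_unmatched // add0n.
  by apply: eq_greedy; apply: fcfs_pool_unmatched.
Qed.

Lemma count_matched_greedy :
  count (cust_matched m n A) (iota 0 m) =
  greedy E s N (fun j => o <= j < o + n) (map c (iota 0 m)).
Proof.
rewrite count_matched_greedy_from //; apply: eq_greedy => j.
by rewrite /fcfs_pool andbT.
Qed.

End FcfsIsGreedy.

Lemma unmatched_c_add_count M N (A : rel nat) :
  unmatched_c M N A + count (cust_matched M N A) (iota 0 M) = M.
Proof. by rewrite addnC count_predC size_iota. Qed.

Lemma unmatched_c_cat (C S : Type) (E : C -> S -> bool)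
    (c : nat -> C) (s : nat -> S) (m M n N : nat) (A1 A2 A : rel nat) :
    m <= M -> n <= N ->
    complete_fcfs E m n c s A1 ->
    complete_fcfs E (M - m) (N - n) (fun i => c (m + i)) (fun j => s (n + j))
      A2 ->
    complete_fcfs E M N c s A ->
  unmatched_c M N A <= unmatched_c m n A1 + unmatched_c (M - m) (N - n) A2.
Proof.
move=> hm hn h1 h2 h.
have u := unmatched_c_add_count M N A.
have u1 := unmatched_c_add_count m n A1.
have u2 := unmatched_c_add_count (M - m) (N - n) A2.
suff : count (cust_matched m n A1) (iota 0 m) +
       count (cust_matched (M - m) (N - n) A2) (iota 0 (M - m)) <=
       count (cust_matched M N A) (iota 0 M) by lia.
rewrite (count_matched_greedy (o := 0) (N := N) h) //.
rewrite (count_matched_greedy (o := 0) (N := N) h1) ?add0n //.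
rewrite (count_matched_greedy (o := n) (N := N) h2) ?subnKC //.
have -> : map c (iota 0 M) =
    map c (iota 0 m) ++ map (fun i => c (m + i)) (iota 0 (M - m)).
  by rewrite -{1}(subnKC hm) iotaD map_cat addnC iotaDl -map_comp.
apply: (leq_trans _ (greedy_cat _ _ _ _ n _ _)); apply: leq_add; apply: eq_leq;
  apply: eq_greedy => j /=.
- by case: ltnP => jn; rewrite ?andbF ?andbT ?(leq_trans jn hn).
- by rewrite andbC.
Qed.

Lemma complete_fcfs_transpose (C S : Type) (E : C -> S -> bool) M N c s
    (A : rel nat) :
  complete_fcfs E M N c s A ->
  complete_fcfs (fun y x => E x y) N M s c (fun j i => A i j).
Proof.
case=> [[in_range uniq_serv uniq_cust] complete fcfs]; split.
- split=> [j i /in_range[] //|j i i'|j j' i];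
    [exact: uniq_cust|exact: uniq_serv].
- by move=> j i jN iM nj ni; apply: complete.
- by move=> j i /fcfs[].
Qed.

Theorem lemma3p2 (C S : finType) (E : C -> S -> bool)
  (hE : connected_bip E)
  (c : nat -> C) (s : nat -> S) (m M n N : nat)
  (hm : m <= M) (hn : n <= N)
  (A1 A2 A : rel nat)
  (h1 : complete_fcfs E m n c s A1)
  (h2 : complete_fcfs E (M - m) (N - n) (fun i => c (m + i)) (fun j => s (n + j)) A2)
  (h : complete_fcfs E M N c s A) :
  unmatched_c M N A <= unmatched_c m n A1 + unmatched_c (M - m) (N - n) A2 /\
  unmatched_s M N A <= unmatched_s m n A1 + unmatched_s (M - m) (N - n) A2.
Proof.
split; first exact: unmatched_c_cat h1 h2 h.
exact: unmatched_c_cat hn hm (complete_fcfs_transpose h1)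
  (complete_fcfs_transpose h2) (complete_fcfs_transpose h).
Qed.
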